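(* Let $L$ be an $n$-modal logic. If $L$ is $1$-tabular, then $L$ is pretransitive and of finite height, i.e. there are $m,h<\omega$ with $L\vdash \Diamond^{m+1}p\to\Diamond^{\le m}p$ and $L\vdash B_h$.
   Context: Fix $n\ge 1$. $n$-modal formulas are built from variables $p_0,p_1,\dots$ with $\to,\bot$ and unary modalities $\Diamond_i$ ($i<n$); $\Box_i=\neg\Diamond_i\neg$. A logic is a set of $n$-modal formulas containing all classical tautologies, $\Diamond_i(p\vee q)\to\Diamond_ip\vee\Diamond_iq$ and $\neg\Diamond_i\bot$ for all $i<n$, closed under modus ponens, uniform substitution and monotonicity (if $\varphi\to\psi\in L$ then $\Diamond_i\varphi\to\Diamond_i\psi\in L$). A $k$-formula is a formula in the variables $p_j$, $j<k$. $L$ is $k$-tabular if there are only finitely many $k$-formulas up to $L$-provable equivalence. Put $\Diamond^0\varphi=\varphi$, $\Diamond^{i+1}\varphi=\Diamond^i(\Diamond_0\varphi\vee\dots\vee\Diamond_{n-1}\varphi)$, $\Diamond^{\le m}\varphi=\bigvee_{i\le m}\Diamond^i\varphi$, $\Box^{\le m}\varphi=\neg\Diamond^{\le m}\neg\varphi$. $L$ is $m$-transitive if $L\vdash\Diamond^{m+1}p\to\Diamond^{\le m}p$, pretransitive if $m$-transitive for some $m$; then, for the least such $m$, $\Diamond^*:=\Diamond^{\le m}$, $\Box^*:=\Box^{\le m}$. Define $B_0=\bot$, $B_{i+1}=p_{i+1}\to\Box^*(\Diamond^*p_{i+1}\vee B_i)$. A pretransitive logic is of finite height if it contains $B_h$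 for some $h<\omega$. *)

From mathcomp Require Import all_boot.
Set Implicit Arguments. Unset Strict Implicit. Unset Printing Implicit Defensive.

Inductive form (n : nat) : Type :=
| Var : nat -> form n
| Bot : form n
| Imp : form n -> form n -> form n
| Dia : 'I_n -> form n -> form n.

Arguments Bot {n}.

Section Connectives.
Variable n : nat.
Definition Neg (a : form n) : form n := Imp a Bot.
Definition Top : form n := Neg Bot.
Definition Or (a b : form n) : form n := Imp (Neg a) b.
Definition And (a b : form n) : form n := Neg (Imp a (Neg b)).
Definition Iff (a b : form n) : form n := And (Imp a b) (Imp b a).
Definition Box (i : 'I_n) (a : form n) : form n := Neg (Dia i (Neg a)).

Definition BigOr (s : seq (form n)) : form n := foldr Or Bot s.

Fixpoint teval (v : form n -> bool) (a : form n) : bool :=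
  match a with
  | Var _ => v a
  | Bot => false
  | Imp b c => ~~ teval v b || teval v c
  | Dia _ _ => v a
  end.

(* classical tautology (substitution instance of a propositional tautology) *)
Definition tautology (a : form n) : Prop := forall v, teval v a = true.

Fixpoint subst (s : nat -> form n) (a : form n) : form n :=
  match a with
  | Var j => s j
  | Bot => Bot
  | Imp b c => Imp (subst s b) (subst s c)
  | Dia i b => Dia i (subst s b)
  end.

Definition is_logic (L : form n -> Prop) : Prop :=
  (forall a, tautology a -> L a) /\
  (forall i : 'I_n, L (Imp (Dia i (Or (Var n 0) (Var n 1)))
                          (Or (Dia i (Var n 0)) (Dia i (Var n 1))))) /\
  (forall i : 'I_n, L (Neg (Dia i Bot))) /\
  (forall a b, L (Imp a b) -> L a -> L b) /\
  (forall s a, L a -> L (subst s a)) /\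
  (forall (i : 'I_n) a b, L (Imp a b) -> L (Imp (Dia i a) (Dia i b))).

Fixpoint kform (k : nat) (a : form n) : bool :=
  match a with
  | Var j => j < k
  | Bot => true
  | Imp b c => kform k b && kform k c
  | Dia _ b => kform k b
  end.

Definition ktabular (L : form n -> Prop) (k : nat) : Prop :=
  exists (N : nat) (f : 'I_N -> form n),
    (forall j, kform k (f j)) /\
    (forall a, kform k a -> exists j, L (Iff a (f j))).

Definition Dall (a : form n) : form n := BigOr [seq Dia i a | i <- enum 'I_n].

Fixpoint Dpow (i : nat) (a : form n) : form n :=
  match i with
  | 0 => a
  | i'.+1 => Dpow i' (Dall a)
  end.

Definition Dle (m : nat) (a : form n) : form n :=
  BigOr [seq Dpow i a | i <- iota 0 m.+1].
Definition Ble (m : nat) (a : form n) : form n := Neg (Dle m (Neg a)).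

Definition mtransitive (L : form n -> Prop) (m : nat) : Prop :=
  L (Imp (Dpow m.+1 (Var n 0)) (Dle m (Var n 0))).

(* B_h computed with Diamond^* := Diamond^{<= m} *)
Fixpoint Bform (m : nat) (h : nat) : form n :=
  match h with
  | 0 => Bot
  | i.+1 => Imp (Var n i.+1)
                (Ble m (Or (Dle m (Var n i.+1)) (Bform m i)))
  end.
End Connectives.

(* By 1-tabularity two of the 1-formulas Dle k p are L-equivalent, say
   Dle i p <-> Dle j p with i < j; as Dpow i.+1 p implies Dle j p, L is
   i-transitive.  For the least such m, Dle m behaves like an S4 diamond.  The
   formulas alt_chain p k, asserting a Dle m-chain of length k along which p
   alternates, are 1-formulas too, so two of them, of lengths h < k, are
   L-equivalent.  Substitute for p the formula odd_top h: it can change its value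
   at most h times along a Dle m-chain, so the chain of length k becomes
   refutable, while the negation of B_h yields the chain of length h. *)

From Stdlib Require Import Classical ClassicalEpsilon Wf_nat.
From mathcomp Require Import all_boot zify.
Set Implicit Arguments. Unset Strict Implicit. Unset Printing Implicit Defensive.

(* Keeping the iterated modalities folded makes them atoms for the propositional
   case analysis of [bool_cases]. *)
Arguments Dle : simpl never.
Arguments Dall : simpl never.
Arguments Dpow : simpl never.
Arguments BigOr : simpl never.

Section LogicRules.
Variables (n : nat) (L : form n -> Prop).
Hypothesis HL : is_logic L.

Lemma logic_taut a : tautology a -> L a.
Proof. by have [H _] := HL; apply: H. Qed.

Lemma logic_mp a b : L (Imp a b) -> L a -> L b.
Proof. by have [_ [_ [_ [H _]]]] := HL; apply: H. Qed.

Lemma logic_subst s a : L a -> L (subst s a).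
Proof. by have [_ [_ [_ [_ [H _]]]]] := HL; apply: H. Qed.

Lemma logic_Dia_mono i a b : L (Imp a b) -> L (Imp (Dia i a) (Dia i b)).
Proof. by have [_ [_ [_ [_ [_ H]]]]] := HL; apply: H. Qed.

Lemma logic_Dia_or i a b : L (Imp (Dia i (Or a b)) (Or (Dia i a) (Dia i b))).
Proof.
have [_ [Hor _]] := HL.
exact: (logic_subst (fun j => if j is 0 then a else if j is 1 then b else Var n j) (Hor i)).
Qed.

Lemma logic_Dia_bot i : L (Neg (Dia i Bot)).
Proof. by have [_ [_ [H _]]] := HL; apply: H. Qed.

Definition provable_all (hs : seq (form n)) : Prop := foldr (fun a P => L a /\ P) True hs.

Lemma teval_foldr_Imp v hs b :
  teval v (foldr (@Imp n) b hs) = all (teval v) hs ==> teval v b.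
Proof. by elim: hs => //= a hs ->; case: (teval v a). Qed.

Lemma taut_closed hs b :
  (forall v, all (teval v) hs -> teval v b) -> provable_all hs -> L b.
Proof.
move=> Hv; have : L (foldr (@Imp n) b hs).
  by apply: logic_taut => v; rewrite teval_foldr_Imp; apply/implyP/Hv.
elim: hs {Hv} => //= a hs IH Hab [Ha Hhs].
exact: IH (logic_mp Hab Ha) Hhs.
Qed.

End LogicRules.

Ltac bool_cases := repeat match goal with
  | |- context [teval ?v ?x] => case: (teval v x)
  | |- context [?v (Var ?a ?b)] => case: (v (Var a b))
  | |- context [?v (Dia ?i ?x)] => case: (v (Dia i x))
  end.

Ltac taut_check := let v := fresh "v" in move=> v /=; bool_cases => //.

Ltac taut := match goal with HL : is_logic _ |- _ => apply: (logic_taut HL); taut_check end.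

Ltac provable_formulas t := match t with
  | (?r, ?H) => let l := provable_formulas r in
                match type of H with _ ?f => constr:(f :: l) end
  | ?H => match type of H with _ ?f => constr:([:: f]) end
  end.

(* [by_taut (H1, ..., Hk)] proves [L b] when [b] follows propositionally from the
   formulas proved by [H1], ..., [Hk]. *)
Ltac by_taut t :=
  let hs := provable_formulas t in
  match goal with HL : is_logic _ |- _ =>
    apply: (taut_closed HL (hs := hs)); [taut_check | by repeat split]
  end.

Section Syntax.
Variable n : nat.
Implicit Types (a : form n) (l : seq (form n)) (s : nat -> form n).

Lemma subst_BigOr s l : subst s (BigOr l) = BigOr (map (subst s) l).
Proof. by rewrite /BigOr; elim: l => //= a l ->. Qed.

Lemma subst_Dall s a : subst s (Dall a) = Dall (subst s a).
Proof. by rewrite /Dall subst_BigOr -map_comp. Qed.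

Lemma DpowS k a : Dpow k.+1 a = Dpow k (Dall a). Proof. by []. Qed.

Lemma subst_Dpow s k a : subst s (Dpow k a) = Dpow k (subst s a).
Proof. by elim: k a => // k IH a; rewrite !DpowS IH subst_Dall. Qed.

Lemma subst_Dle s m a : subst s (Dle m a) = Dle m (subst s a).
Proof.
by rewrite /Dle subst_BigOr -map_comp; congr BigOr; apply: eq_map => k /=; rewrite subst_Dpow.
Qed.

Lemma Dpow_Dall k a : Dpow k (Dall a) = Dall (Dpow k a).
Proof. by elim: k a => // k IH a; rewrite !DpowS IH. Qed.

Lemma Dpow_add i j a : Dpow i (Dpow j a) = Dpow (i + j) a.
Proof. by elim: i j a => // i IH j a; rewrite DpowS -Dpow_Dall -DpowS IH addSnnS. Qed.

Lemma kform_BigOr k l : all (kform k) l -> kform k (BigOr l).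
Proof. by rewrite /BigOr; elim: l => //= a l IH /andP[-> /IH]. Qed.

Lemma kform_Dall k a : kform k a -> kform k (Dall a).
Proof. by move=> Ha; apply: kform_BigOr; rewrite all_map; apply/allP. Qed.

Lemma kform_Dpow k i a : kform k a -> kform k (Dpow i a).
Proof. by elim: i a => // i IH a Ha; apply/IH/kform_Dall. Qed.

Lemma kform_Dle k m a : kform k a -> kform k (Dle m a).
Proof.
by move=> Ha; apply: kform_BigOr; rewrite all_map; apply/allP => i _ /=; apply: kform_Dpow.
Qed.

End Syntax.

Section NormalOperators.
Variables (n : nat) (L : form n -> Prop).
Hypothesis HL : is_logic L.
Implicit Types (a b c : form n) (f g : form n -> form n).

Lemma BigOr_intro (I : eqType) (r : seq I) (F : I -> form n) i :
  i \in r -> L (Imp (F i) (BigOr (map F r))).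
Proof.
elim: r => //= j r IH; rewrite inE => /orP[/eqP <-|/IH Hi]; first by taut.
by_taut Hi.
Qed.

Lemma BigOr_lub (I : eqType) (r : seq I) (F : I -> form n) c :
  (forall i, i \in r -> L (Imp (F i) c)) -> L (Imp (BigOr (map F r)) c).
Proof.
elim: r => [|j r IH] Hr /=; first by taut.
have Hj := Hr j (mem_head j r).
have Hl : L (Imp (BigOr (map F r)) c).
  by apply: IH => i ir; apply: Hr; rewrite inE ir orbT.
by_taut (Hj, Hl).
Qed.

Record normal_op f : Prop := NormalOp {
  normal_mono a b : L (Imp a b) -> L (Imp (f a) (f b));
  normal_or a b : L (Imp (f (Or a b)) (Or (f a) (f b)));
  normal_bot : L (Neg (f Bot)) }.

Lemma normal_Dia i : normal_op (Dia i).
Proof. split; [exact: logic_Dia_mono | exact: logic_Dia_or | exact: logic_Dia_bot]. Qed.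

Lemma normal_comp f g : normal_op f -> normal_op g -> normal_op (f \o g).
Proof.
move=> [fmono for_ fbot] [gmono gor gbot]; split => [a b Hab|a b|] /=.
- exact/fmono/gmono.
- have Hf := fmono _ _ (gor a b); have Hor := for_ (g a) (g b); by_taut (Hf, Hor).
- have Hg : L (Imp (g Bot) Bot) := gbot.
  have Hf := fmono _ _ Hg; by_taut (Hf, fbot).
Qed.

Lemma normal_BigOr (I : eqType) (r : seq I) (F : I -> form n -> form n) :
  (forall i, normal_op (F i)) -> normal_op (fun a => BigOr [seq F i a | i <- r]).
Proof.
move=> HF; split => [a b Hab|a b|].
- apply: BigOr_lub => i ir; have Hi := normal_mono (HF i) Hab.
  have Hin := BigOr_intro (fun j => F j b) ir; by_taut (Hi, Hin).
- apply: BigOr_lub => i ir; have Hi := normal_or (HF i) a b.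
  have Ha := BigOr_intro (fun j => F j a) ir.
  have Hb := BigOr_intro (fun j => F j b) ir; by_taut (Hi, Ha, Hb).
- apply: BigOr_lub => i _; exact: normal_bot.
Qed.

Lemma normal_Dall : normal_op (@Dall n).
Proof. exact: (normal_BigOr _ normal_Dia). Qed.

Lemma normal_Dpow k : normal_op (Dpow k).
Proof.
elim: k => [|k IH]; first by split=> [a b //|a b|]; rewrite /Dpow; taut.
exact: (normal_comp IH normal_Dall).
Qed.

Lemma normal_Dle m : normal_op (Dle m).
Proof. exact: (normal_BigOr _ normal_Dpow). Qed.

Lemma normal_refute f a : normal_op f -> L (Neg a) -> L (Neg (f a)).
Proof.
move=> Hf Ha; have Hfa := normal_mono Hf (Ha : L (Imp a Bot)).
have Hbot := normal_bot Hf; by_taut (Hfa, Hbot).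
Qed.

Lemma normal_BigOr_distr f l : normal_op f -> L (Imp (f (BigOr l)) (BigOr (map f l))).
Proof.
move=> Hf; elim: l => [|a l IH] /=; first by have Hbot := normal_bot Hf; by_taut Hbot.
have Hor := normal_or Hf a (BigOr l); by_taut (Hor, IH).
Qed.

Lemma normal_K f c a :
  normal_op f -> L (Imp (And (Neg (f (Neg c))) (f a)) (f (And c a))).
Proof.
move=> Hf; have Hsplit : L (Imp a (Or (And c a) (Neg c))) by taut.
have Hmono := normal_mono Hf Hsplit; have Hor := normal_or Hf (And c a) (Neg c).
by_taut (Hmono, Hor).
Qed.

End NormalOperators.

Section Pretransitive.
Variables (n : nat) (L : form n -> Prop).
Hypothesis HL : is_logic L.
Variable m : nat.
Implicit Types (a q : form n).

Lemma Dpow_Dle k a : k <= m -> L (Imp (Dpow k a) (Dle m a)).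
Proof. by move=> km; apply: (BigOr_intro HL (fun i => Dpow i a)); rewrite mem_iota. Qed.

Lemma Dle_T a : L (Imp a (Dle m a)).
Proof. exact: Dpow_Dle 0 a _. Qed.

Hypothesis HT : mtransitive L m.

Lemma mtransitive_inst a : L (Imp (Dpow m.+1 a) (Dle m a)).
Proof.
have Ha : L (Imp (subst (fun=> a) (Dpow m.+1 (Var n 0)))
                 (subst (fun=> a) (Dle m (Var n 0)))) := logic_subst HL (fun=> a) HT.
by rewrite subst_Dpow subst_Dle in Ha.
Qed.

Lemma mtransitive_Dpow k a : L (Imp (Dpow k a) (Dle m a)).
Proof.
elim/ltn_ind: k => k IH; case: (leqP k m) => [|mk]; first exact: Dpow_Dle.
rewrite -(subnK mk) -Dpow_add.
have Hstep := normal_mono (normal_Dpow HL (k - m.+1)) (mtransitive_inst a).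
have Hdistr : L (Imp (Dpow (k - m.+1) (Dle m a))
                     (BigOr [seq Dpow (k - m.+1) (Dpow i a) | i <- iota 0 m.+1])).
  rewrite (map_comp _ (fun j => Dpow j a)).
  exact: (normal_BigOr_distr HL _ (normal_Dpow HL _)).
have Hlub : L (Imp (BigOr [seq Dpow (k - m.+1) (Dpow i a) | i <- iota 0 m.+1]) (Dle m a)).
  apply: (BigOr_lub HL (F := fun i => Dpow (k - m.+1) (Dpow i a))) => i.
  by rewrite mem_iota Dpow_add => Hi; apply: IH; lia.
by_taut (Hstep, Hdistr, Hlub).
Qed.

Lemma Dle_4 a : L (Imp (Dle m (Dle m a)) (Dle m a)).
Proof.
apply: (BigOr_lub HL (F := fun i => Dpow i (Dle m a))) => i _.
have Hdistr : L (Imp (Dpow i (Dle m a)) (BigOr [seq Dpow i (Dpow j a) | j <- iota 0 m.+1])).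
  rewrite (map_comp _ (fun j => Dpow j a)).
  exact: (normal_BigOr_distr HL _ (normal_Dpow HL _)).
have Hlub : L (Imp (BigOr [seq Dpow i (Dpow j a) | j <- iota 0 m.+1]) (Dle m a)).
  apply: (BigOr_lub HL (F := fun j => Dpow i (Dpow j a))) => j _.
  by rewrite Dpow_add; apply: mtransitive_Dpow.
by_taut (Hdistr, Hlub).
Qed.

Lemma Dle_neg_4 q : L (Imp (Neg (Dle m q)) (Ble m (Neg (Dle m q)))).
Proof.
have Hnn : L (Imp (Neg (Neg (Dle m q))) (Dle m q)) by taut.
have Hmono := normal_mono (normal_Dle HL m) Hnn; have H4 := Dle_4 q.
by_taut (Hmono, H4).
Qed.

End Pretransitive.

Section FiniteHeight.
Variables (n m : nat) (L : form n -> Prop).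
Hypothesis HL : is_logic L.
Hypothesis HT : mtransitive L m.
Implicit Types (a b c : form n).

Definition alt_lit a k : form n := if odd k then a else Neg a.

(* [alt_chain a k]: a [Dle m]-path x_k, ..., x_0 starting here, with x_j |= a iff j is odd. *)
Fixpoint alt_chain a k : form n :=
  if k is k'.+1 then And (alt_lit a k) (Dle m (alt_chain a k')) else Neg a.

(* [odd_top h] holds iff the largest i <= h such that [Dle m (Var n i)] holds is odd. *)
Fixpoint odd_top h : form n :=
  if h is h'.+1 then
    Or (And (Dle m (Var n h)) (if odd h then Top n else Bot))
       (And (Neg (Dle m (Var n h))) (odd_top h'))
  else Bot.

Lemma subst_alt_chain s a k : subst s (alt_chain a k) = alt_chain (subst s a) k.
Proof. by elim: k => // k IH; cbn -[Dle]; rewrite subst_Dle IH /alt_lit; case: ifP. Qed.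

Lemma kform_alt_chain a k : kform 1 a -> kform 1 (alt_chain a k).
Proof.
move=> Ha; elim: k => [|k IH]; first by rewrite /= Ha.
have := kform_Dle m IH; rewrite /= /alt_lit; case: ifP => _ /= ->; by rewrite Ha.
Qed.

Lemma alt_chain_lit a k : L (Imp (alt_chain a k) (alt_lit a k)).
Proof. by case: k => [|k]; taut. Qed.

Lemma alt_chain_congr c a b k : L (Imp c (Iff a b)) -> L (Imp c (Ble m c)) ->
  L (Imp c (Iff (alt_chain a k) (alt_chain b k))).
Proof.
move=> Hab Hc; elim: k => [|k IH]; first by by_taut Hab.
have Ka := normal_K HL c (alt_chain a k) (normal_Dle HL m).
have Kb := normal_K HL c (alt_chain b k) (normal_Dle HL m).
have Mab : L (Imp (Dle m (And c (alt_chain a k))) (Dle m (alt_chain b k))).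
  by apply: (normal_mono (normal_Dle HL m)); by_taut IH.
have Mba : L (Imp (Dle m (And c (alt_chain b k))) (Dle m (alt_chain a k))).
  by apply: (normal_mono (normal_Dle HL m)); by_taut IH.
rewrite /= /alt_lit; case: ifP => _; by_taut (Hab, Hc, Ka, Kb, Mab, Mba).
Qed.

(* A chain of length k.+1 contains one of length k: refuting the chains of one
   parity from some length on refutes all longer chains. *)
Lemma alt_chain_refute_parity a (parity : bool) h :
  (forall j, h <= j -> odd j != parity -> L (Neg (alt_chain a j))) ->
  forall k, h < k -> L (Neg (alt_chain a k)).
Proof.
move=> Hpar [//|k] hk.
case: (boolP (odd k.+1 != parity)) => [|Hk]; first exact: Hpar (ltnW hk).
have Hpark : odd k != parity by move: Hk; rewrite /= negbK => /eqP <-; case: (odd k).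
have Hrefk := Hpar k hk Hpark.
have Hdle := normal_refute HL (normal_Dle HL m) Hrefk.
rewrite /=; by_taut Hdle.
Qed.

Lemma odd_top_skip h : L (Imp (Neg (Dle m (Var n h.+1))) (Iff (odd_top h.+1) (odd_top h))).
Proof. by taut; case: ifP => _ /=; bool_cases. Qed.

Lemma odd_top_hit h :
  L (Imp (Dle m (Var n h.+1)) (Iff (odd_top h.+1) (if odd h.+1 then Top n else Bot))).
Proof. by taut; case: ifP => _ /=; bool_cases. Qed.

Lemma alt_chain_odd_top_refute h k : h < k -> L (Neg (alt_chain (odd_top h) k)).
Proof.
elim: h k => [|h IH].
  apply: (@alt_chain_refute_parity _ false) => j _ Hj.
  by have := alt_chain_lit (odd_top 0) j; rewrite /alt_lit; case: (odd j) Hj.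
apply: (@alt_chain_refute_parity _ (odd h.+1)) => j hj Hj.
have Hcongr := alt_chain_congr j (odd_top_skip h) (Dle_neg_4 HL HT (Var n h.+1)).
have Hhit := odd_top_hit h; have Hlit := alt_chain_lit (odd_top h.+1) j.
have IHj := IH j hj.
move: Hj Hhit Hlit; rewrite /alt_lit; case: (odd j); case: (odd h.+1) => // _ Hhit Hlit;
  by_taut (Hcongr, Hhit, Hlit, IHj).
Qed.

Lemma not_Bform_alt_chain h : L (Imp (Neg (Bform n m h)) (alt_chain (odd_top h) h)).
Proof.
elim: h => [|h IH]; first by taut.
have HT0 := Dle_T HL m (Var n h.+1).
have Hlit : L (Imp (Dle m (Var n h.+1)) (alt_lit (odd_top h.+1) h.+1)).
  by have := odd_top_hit h; rewrite /alt_lit; case: (odd h.+1) => Hhit; by_taut Hhit.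
have Hcongr := alt_chain_congr h (odd_top_skip h) (Dle_neg_4 HL HT (Var n h.+1)).
have Hprev : L (Imp (Neg (Or (Dle m (Var n h.+1)) (Bform n m h))) (alt_chain (odd_top h.+1) h)).
  by by_taut (Hcongr, IH).
have Hdle := normal_mono (normal_Dle HL m) Hprev.
change (L (Imp (Neg (Imp (Var n h.+1) (Ble m (Or (Dle m (Var n h.+1)) (Bform n m h)))))
               (And (alt_lit (odd_top h.+1) h.+1) (Dle m (alt_chain (odd_top h.+1) h))))).
by_taut (HT0, Hlit, Hdle).
Qed.

End FiniteHeight.

Section OneTabular.
Variables (n : nat) (L : form n -> Prop).
Hypothesis HL : is_logic L.
Hypothesis Htab : ktabular L 1.

Lemma ktabular_pigeonhole (F : nat -> form n) : (forall k, kform 1 (F k)) ->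
  exists i j, i < j /\ L (Iff (F i) (F j)).
Proof.
case: Htab => N [rep [_ Hrep]] HF.
have class_of k : {j | L (Iff (F k) (rep j))}.
  exact/constructive_indefinite_description/Hrep/HF.
pose g (k : 'I_N.+1) := sval (class_of k).
have /injectivePn[x [y xy gxy]] : ~~ injectiveb g.
  by apply/injectiveP => /leq_card; rewrite !card_ord ltnn.
have Hx : L (Iff (F x) (rep (g y))) by rewrite -gxy; exact: svalP (class_of x).
have Hy : L (Iff (F y) (rep (g y))) := svalP (class_of y).
case: (ltngtP x y) => [lt|lt|/val_inj eq]; last by rewrite eq eqxx in xy.
- by exists x, y; split => //; by_taut (Hx, Hy).
- by exists y, x; split => //; by_taut (Hx, Hy).
Qed.

Lemma ktabular_pretransitive : exists m, mtransitive L m.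
Proof.
have [i [j [ij Hij]]] := ktabular_pigeonhole (fun k => kform_Dle k (isT : kform 1 (Var n 0))).
exists i; have Hle := Dpow_Dle HL (Var n 0) ij.
by_taut (Hle, Hij).
Qed.

Lemma ktabular_finite_height m : mtransitive L m -> exists h, L (Bform n m h).
Proof.
move=> HT.
have [h [k [hk Hhk]]] :=
  ktabular_pigeonhole (fun j => kform_alt_chain m j (isT : kform 1 (Var n 0))).
exists h; have Hsubst := logic_subst HL (fun=> odd_top n m h) Hhk.
rewrite /= !subst_alt_chain /= in Hsubst.
have Hup := alt_chain_odd_top_refute HL HT hk.
have Hdown := not_Bform_alt_chain HL HT h.
by_taut (Hsubst, Hup, Hdown).
Qed.

End OneTabular.

Lemma exists_least (P : nat -> Prop) :
  (exists k, P k) -> exists m, P m /\ forall k, k < m -> ~ P k.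
Proof.
move=> /(dec_inh_nat_subset_has_unique_least_element _ (fun k => classic (P k))).
move=> [m [[Pm Hmin] _]]; exists m; split => // k km /Hmin; lia.
Qed.

Theorem mainTheorem1 (n : nat) (hn : 0 < n) (L : form n -> Prop) :
  is_logic L -> ktabular L 1 ->
  exists m : nat,
    mtransitive L m /\ (forall m', m' < m -> ~ mtransitive L m') /\
    exists h : nat, L (Bform n m h).
Proof.
move=> HL Htab.
have [m [Hm Hmin]] := exists_least (ktabular_pretransitive HL Htab).
exists m; split=> //; split=> //.
exact: ktabular_finite_height.
Qed.
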